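(* Let $G$ be a connected graph and let $u,v\in V(G)$. (a) Suppose $u$ and $v$ are adjacent in $G$ and let $T,T'$ be search trees on $G$. Then $u$ and $v$ have different relative order in $T$ and $T'$ if and only if every sequence of rotations transforming $T$ into $T'$ contains an odd number of $uv$-rotations. (b) If $u$ and $v$ are true twins in $G$ and $T,T'$ are search trees on $G$, then every minimum length $TT'$-path in $\mathcal{R}(G)$ has exactly one edge determined by a $uv$-rotation if $u$ and $v$ have different relative orders in $T$ and $T'$, and no edge determined by a $uv$-rotation if $u$ and $v$ have the same relative order in $T$ and $T'$.
   Context: For a connected graph $G$, a search tree on $G$ is a rooted tree with vertex set $V(G)$ defined recursively: its root is some vertex $r\in V(G)$, and the children of $r$ are the roots of search trees on the connected components of $G-r$. For a rooted tree $T$ and $w\in V(T)$, $T|w$ denotes the subtree rooted at $w$. Let $T$ be a search tree on $G$, let $b$ be a child of $a$ in $T$, and let $p$ be the parent of $a$ (if it exists). The $ab$-rotation (also called a rotation of the pair $a,b$) transforms $T$ into the search tree $T'$ in which: $a$ is a child of $b$ and $b$ is a child of $p$ (or $b$ is the root if $a$ was the root); every subtree of $a$ in $T$ other than $T|b$ is a subtree of $a$ in $T'$; and every subtree $S$ of $b$ in $T$ is a subtree of $a$ in $T'$ if $a$ is adjacent in $G$ to some vertex of $S$, and a subtree of $b$ in $T'$ otherwise. The rotation graph $\mathcal{R}(G)$ has the search trees on $G$ as vertices, two adjacent iff they differ by one rotation. If $u$ is an ancestor of $v$ in $T$ and a descendant of $v$ in $T'$ (or vice versa), $u,v$ have different relative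 order in $T$ and $T'$; if $u$ is an ancestor of $v$ in both, or a descendant of $v$ in both, they have the same relative order. True twins: vertices with equal closed neighbourhoods. *)

From mathcomp Require Import all_boot.
Set Implicit Arguments. Unset Strict Implicit. Unset Printing Implicit Defensive.

(* A graph G: vertex set the finType V, adjacency e (assumed symmetric,
   irreflexive in the theorem). *)

(* A rooted tree with vertex set V is encoded by its parent function
   (None at the root). *)
Definition rtree (V : finType) := {ffun V -> option V}.

Section Defs.
Variables (V : finType) (e : rel V).

Definition erel (S : {set V}) : rel V :=
  [rel x y | [&& x \in S, y \in S & e x y]].

Definition is_comp (S C : {set V}) : Prop :=
  exists2 x, x \in S & C = [set y in S | connect (erel S) x y].

(* is_search S r t : the restriction of t to S is a search tree on G[S]
   with root r (recursive definition from the paper): r \in S and the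
   children of r are the roots of search trees on the connected
   components of G[S] - r. *)
Inductive is_search : {set V} -> V -> rtree V -> Prop :=
| IsSearch (S : {set V}) (r : V) (t : rtree V) :
    r \in S ->
    (forall C, is_comp (S :\ r) C ->
       exists c, [/\ c \in C, t c = Some r & is_search C c t]) ->
    is_search S r t.

Definition search_tree (t : rtree V) : Prop :=
  exists r, t r = None /\ is_search [set: V] r t.

Definition prel (t : rtree V) : rel V := [rel x y | t x == Some y].
Definition anc (t : rtree V) (x y : V) : bool :=
  (x != y) && connect (prel t) y x.      (* x is a proper ancestor of y *)
Definition in_subtree (t : rtree V) (x y : V) : bool := connect (prel t) y x.

(* the tree obtained from t by the ab-rotation (b a child of a) *)
Definition rotate (t : rtree V) (a b : V) : rtree V :=
  [ffun x => if x == a then Some b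
             else if x == b then t a
             else if t x == Some b then
               (if [exists y, in_subtree t x y && e a y] then Some a else Some b)
             else t x].

Definition rotation (t : rtree V) (a b : V) (t' : rtree V) : Prop :=
  [/\ search_tree t, search_tree t', t b = Some a & t' = rotate t a b].

Fixpoint rot_seq (t : rtree V) (s : seq (V * V * rtree V)) (t' : rtree V) : Prop :=
  match s with
  | [::] => t = t'
  | (a, b, t1) :: s' => rotation t a b t1 /\ rot_seq t1 s' t'
  end.

Definition n_uv (u v : V) (s : seq (V * V * rtree V)) : nat :=
  count (fun p : V * V * rtree V =>
           ((p.1.1 == u) && (p.1.2 == v)) || ((p.1.1 == v) && (p.1.2 == u))) s.

Definition diff_order (t t' : rtree V) (u v : V) : Prop :=
  (anc t u v /\ anc t' v u) \/ (anc t v u /\ anc t' u v).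

Definition same_order (t t' : rtree V) (u v : V) : Prop :=
  (anc t u v /\ anc t' u v) \/ (anc t v u /\ anc t' v u).

Definition min_rot_seq (t : rtree V) (s : seq (V * V * rtree V)) (t' : rtree V) : Prop :=
  rot_seq t s t' /\ forall s', rot_seq t s' t' -> size s <= size s'.

(* true twins: equal closed neighbourhoods *)
Definition true_twins (u v : V) : Prop :=
  forall w, ((w == u) || e u w) = ((w == v) || e v w).

End Defs.

(* A search tree on G is the same thing as a rooted tree on V(G) in which every subtree
   T|w contains a neighbour of the parent of w and any two adjacent vertices are
   comparable. This description survives rotations, and the ab-rotation reverses the
   relative order of a and b but of no other adjacent pair. So along a rotation
   sequence the order of an edge uv is reversed exactly at its uv-rotations, which
   gives (a) once the rotation graph is known to be connected: rotate the topmost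
   vertex whose subtree differs in T' up to the position that subtree occupies in T,
   and repeat.
   If u and v are true twins, the transposition (u v) is an automorphism of G and a
   uv-rotation of T is T relabelled by (u v). Between two uv-rotations of a sequence
   one may therefore relabel the intermediate rotations instead and drop both; so a
   shortest sequence has at most one uv-rotation, and its parity is given by (a). *)

From mathcomp Require Import all_boot fingroup perm zify.
Set Implicit Arguments. Unset Strict Implicit. Unset Printing Implicit Defensive.

Lemma connect_ind_to (T : finType) (r : rel T) (x : T) (P : T -> Prop) :
  P x -> (forall y z, r y z -> connect r z x -> P z -> P y) ->
  forall y, connect r y x -> P y.
Proof.
move=> Px IH y /connectP [p]; elim: p y => [|z p IHp] y /=; first by move=> _ <-.
case/andP=> ryz pz zx; apply: IH ryz _ (IHp z pz zx).
by apply/connectP; exists p.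
Qed.

Lemma homo_connect (T T' : finType) (f : T -> T') (r : rel T) (r' : rel T') :
  {homo f : x y / r x y >-> r' x y} -> {homo f : x y / connect r x y >-> connect r' x y}.
Proof.
move=> fr x _ /connectP [p rp ->]; apply/connectP.
by exists (map f p); [apply: homo_path rp | rewrite last_map].
Qed.

(** * Rooted trees given by parent functions *)

Section RootedTree.
Variables (V : finType) (t : rtree V).

Definition subtree (x : V) : {set V} := [set y | in_subtree t x y].

Lemma mem_subtree x y : (y \in subtree x) = in_subtree t x y.
Proof. by rewrite inE. Qed.

Definition rooted := exists2 r, t r = None & forall y, in_subtree t r y.

Lemma in_subtree_refl x : in_subtree t x x. Proof. exact: connect0. Qed.

Lemma in_subtree_trans x y z : in_subtree t x y -> in_subtree t y z -> in_subtree t x z.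
Proof. by move=> xy yz; apply: connect_trans yz xy. Qed.

Lemma in_subtree_parent y p : t y = Some p -> in_subtree t p y.
Proof. by move=> yp; apply: connect1; rewrite /prel /= yp. Qed.

Lemma in_subtree_ind x (P : V -> Prop) :
  P x -> (forall y p, t y = Some p -> in_subtree t x p -> P p -> P y) ->
  forall y, in_subtree t x y -> P y.
Proof. by move=> Px IH; apply: connect_ind_to Px _ => y z /eqP; apply: IH. Qed.

Lemma in_subtree_neq_parent x y : in_subtree t x y -> y != x ->
  exists2 p, t y = Some p & in_subtree t x p.
Proof.
move: y; apply: in_subtree_ind; first by rewrite eqxx.
by move=> y p yp xp _ _; exists p.
Qed.

Lemma in_subtree_neq_child x y : in_subtree t x y -> y != x ->
  exists2 c, t c = Some x & in_subtree t c y.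
Proof.
move: y; apply: in_subtree_ind; first by rewrite eqxx.
move=> y p yp _ IHp _; case: (eqVneq p x) => [<-|px].
  by exists y; rewrite ?in_subtree_refl.
by case: (IHp px) => c cx cp; exists c; last apply: in_subtree_trans cp (in_subtree_parent yp).
Qed.

Lemma in_subtree_total x x' y : in_subtree t x y -> in_subtree t x' y ->
  in_subtree t x x' || in_subtree t x' x.
Proof.
move=> xy x'y; move: y x'y xy; apply: in_subtree_ind => [->//|y p yp x'p IHp xy].
case: (eqVneq y x) => [<-|yx]; first by rewrite (in_subtree_trans x'p (in_subtree_parent yp)) orbT.
by case: (in_subtree_neq_parent xy yx) => p'; rewrite yp => -[<-]; apply: IHp.
Qed.

Lemma subtree_sub x y : in_subtree t x y -> subtree y \subset subtree x.
Proof. by move=> xy; apply/subsetP => z; rewrite !inE; apply: in_subtree_trans. Qed.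

Lemma in_subtree_root r x : t r = None -> in_subtree t x r -> x = r.
Proof.
move=> tr xr; apply/eqP; rewrite eq_sym; apply: contraT.
by case/(in_subtree_neq_parent xr) => p; rewrite tr.
Qed.

Hypothesis t_rooted : rooted.

Lemma rooted_depth : exists d : V -> nat, forall y p, t y = Some p -> d p < d y.
Proof.
have [r tr rt] := t_rooted.
have d_ex y : exists n, iter n (obind t) (Some y) == None.
  apply: (in_subtree_ind (P := fun y => exists n, iter n (obind t) (Some y) == None)) (rt y).
    by exists 1; rewrite /= tr.
  by move=> z p zp _ [n pn]; exists n.+1; rewrite iterSr /= zp.
exists (fun y => ex_minn (d_ex y)) => y p yp.
case: ex_minnP => m _ min_m; case: ex_minnP => -[|n] // yn _.
by rewrite ltnS min_m // -yp; rewrite iterSr in yn.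
Qed.

Lemma in_subtree_depth (d : V -> nat) : (forall y p, t y = Some p -> d p < d y) ->
  forall x y, in_subtree t x y -> d x <= d y.
Proof.
move=> dP x; apply: in_subtree_ind => // y p yp _ xp.
exact: leq_trans xp (ltnW (dP _ _ yp)).
Qed.

Lemma in_subtree_anti x y : in_subtree t x y -> in_subtree t y x -> x = y.
Proof.
move=> xy yx; apply/eqP; rewrite eq_sym; apply: contraT => yNx.
have [d dP] := rooted_depth; have [p yp xp] := in_subtree_neq_parent xy yNx.
have := leq_ltn_trans (in_subtree_depth dP yx) (leq_ltn_trans (in_subtree_depth dP xp) (dP _ _ yp)).
by rewrite ltnn.
Qed.

Lemma parent_neq y : t y != Some y.
Proof. by have [d dP] := rooted_depth; apply/eqP => /dP; rewrite ltnn. Qed.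

Lemma parent_notin_subtree y p : t y = Some p -> ~~ in_subtree t y p.
Proof.
move=> yp; apply/negP => /(in_subtree_anti (in_subtree_parent yp)) py.
by have := parent_neq y; rewrite yp py eqxx.
Qed.

Lemma parent_neq_child y p : t y = Some p -> p != y.
Proof. by move=> yp; apply/eqP => py; have := parent_neq y; rewrite yp py eqxx. Qed.

Lemma subtree_proper x y : in_subtree t x y -> y != x -> subtree y \proper subtree x.
Proof.
move=> xy yNx; rewrite properE subtree_sub //=; apply/subsetPn.
exists x; rewrite !inE ?in_subtree_refl //.
by apply: contra yNx => /(in_subtree_anti xy) ->.
Qed.

Lemma subtree_parent_proper y p : t y = Some p -> subtree y \proper subtree p.
Proof. by move=> yp; rewrite subtree_proper ?(in_subtree_parent yp) // eq_sym parent_neq_child. Qed.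

Lemma sibling_in_subtree p x y : t x = Some p -> t y = Some p -> in_subtree t x y -> x = y.
Proof.
move=> xp yp xy; apply/eqP; rewrite eq_sym; apply: contraT => yNx.
have [q] := in_subtree_neq_parent xy yNx; rewrite yp => -[<-].
by rewrite (negbTE (parent_notin_subtree xp)).
Qed.

End RootedTree.

Section TreeBySubtrees.
Variables (V : finType) (t t2 : rtree V).
Hypotheses (t_rooted : rooted t) (t2_rooted : rooted t2).

Lemma subtree_root r : t r = None -> subtree t r = setT.
Proof.
move=> tr; have [r0 tr0 r0t] := t_rooted; rewrite -(in_subtree_root tr (r0t r)).
by apply/setP => y; rewrite mem_subtree inE r0t.
Qed.

Hypothesis t_t2 : subtree t =1 subtree t2.

Let in_subtree_eq x y : in_subtree t x y = in_subtree t2 x y.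
Proof. by rewrite -!mem_subtree t_t2. Qed.

Lemma parent_eq_subtree x p : t x = Some p -> t2 x = Some p.
Proof.
move=> xp; have px2 : in_subtree t2 p x by rewrite -in_subtree_eq in_subtree_parent.
have xNp : x != p by rewrite eq_sym (parent_neq_child t_rooted xp).
have [q xq pq] := in_subtree_neq_parent px2 xNp.
have qx : in_subtree t q x by rewrite in_subtree_eq in_subtree_parent.
have xNq : x != q by rewrite eq_sym (parent_neq_child t2_rooted xq).
have [p' xp' qp] := in_subtree_neq_parent qx xNq.
move: xp'; rewrite xp => -[pp']; rewrite -pp' in qp.
by rewrite xq (in_subtree_anti t_rooted qp) // in_subtree_eq.
Qed.

End TreeBySubtrees.

Lemma eq_tree_subtree (V : finType) (t t2 : rtree V) : rooted t -> rooted t2 ->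
  subtree t =1 subtree t2 -> t = t2.
Proof.
move=> t_rooted t2_rooted t_t2; apply/ffunP => x.
case xp: (t x) => [p|]; first by rewrite (parent_eq_subtree t_rooted t2_rooted t_t2 xp).
case xq: (t2 x) => [q|] //.
by rewrite (parent_eq_subtree t2_rooted t_rooted (fun y => esym (t_t2 y)) xq) in xp.
Qed.

(** * Search trees *)

Section Components.
Variables (V : finType) (e : rel V).
Hypothesis e_sym : symmetric e.
Implicit Types S C : {set V}.

Definition comp_of (S : {set V}) (x : V) : {set V} := [set y in S | connect (erel e S) x y].

Lemma erel_sym S : symmetric (erel e S).
Proof. by move=> x y; rewrite /erel /= e_sym andbCA. Qed.

Lemma connect_erelC S x y : connect (erel e S) x y = connect (erel e S) y x.
Proof. exact/sym_connect_sym/erel_sym. Qed.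

Lemma connect_erel_sub S S' x y : S \subset S' ->
  connect (erel e S) x y -> connect (erel e S') x y.
Proof.
move=> /subsetP SS'; apply: connect_sub => a b /and3P [aS bS ab].
by apply: connect1; rewrite /erel /= SS' ?SS'.
Qed.

Lemma comp_of_sub S x : comp_of S x \subset S.
Proof. by apply/subsetP => y; rewrite inE => /andP []. Qed.

Lemma mem_comp_of S x : x \in S -> x \in comp_of S x.
Proof. by move=> xS; rewrite inE xS connect0. Qed.

Lemma comp_of_connected S x y : x \in S -> y \in comp_of S x ->
  connect (erel e (comp_of S x)) x y.
Proof.
move=> xS; rewrite inE => /andP [_ xy]; rewrite connect_erelC; rewrite connect_erelC in xy.
move: y xy; apply: connect_ind_to => [|a b /and3P [aS bS ab] bx IHb]; first exact: connect0.
apply: connect_trans IHb; apply: connect1.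
have ax : connect (erel e S) a x by apply: connect_trans (connect1 _) bx; rewrite /erel /= aS bS ab.
by rewrite /erel /= ab !inE aS bS connect_erelC ax connect_erelC bx.
Qed.

Lemma connect_exit_edge S C x y : connect (erel e S) x y -> x \notin C -> y \in C ->
  exists a b, [/\ a \in S, b \in S, e a b, a \notin C & b \in C].
Proof.
move=> xy xC yC; move: x xy xC.
apply: connect_ind_to => [|x z /and3P [xS zS xz] _ IHz xC]; first by rewrite yC.
case zC: (z \in C); last by apply: IHz; rewrite zC.
by exists x, z; rewrite xS zS xz xC.
Qed.
End Components.

Section SearchShape.
Variables (V : finType) (e : rel V).
Hypothesis e_sym : symmetric e.
Implicit Types (t : rtree V) (S : {set V}).

Definition parent_adjacent t :=
  forall w x, t w = Some x -> exists z, in_subtree t w z && e x z.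

Definition edges_nested t :=
  forall x y, e x y -> in_subtree t x y || in_subtree t y x.

Definition search_shape t := [/\ rooted t, parent_adjacent t & edges_nested t].

Lemma shape_rooted t : search_shape t -> rooted t. Proof. by case. Qed.

Section ShapeIsSearch.
Variable t : rtree V.
Hypotheses (t_rooted : rooted t) (t_adj : parent_adjacent t) (t_nested : edges_nested t).

Lemma subtree_connected x y : in_subtree t x y -> connect (erel e (subtree t x)) x y.
Proof.
have [n] := ubnP #|subtree t x|; elim: n x y => // n IH x y /ltnSE lt_x xy.
case: (eqVneq y x) => [->|yx]; first exact: connect0.
have [c cx cy] := in_subtree_neq_child xy yx.
have cx_proper := subtree_parent_proper t_rooted cx.
have {}IH := IH c _ (leq_trans (proper_card cx_proper) lt_x).
have [z /andP [cz xz]] := t_adj cx.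
have xcz := in_subtree_trans (in_subtree_parent cx) cz.
apply: connect_trans (connect_erel_sub (proper_sub cx_proper) (IH y cy)).
apply: connect_trans (connect1 (_ : erel e (subtree t x) x z)) _.
  by rewrite /erel /= !inE in_subtree_refl xz xcz.
by rewrite connect_erelC //; apply: connect_erel_sub (proper_sub cx_proper) (IH z cz).
Qed.

Lemma subtree_comp c x z : t c = Some x -> in_subtree t c z ->
  subtree t c = comp_of e (subtree t x :\ x) z.
Proof.
move=> cx cz; have c_sub : subtree t c \subset subtree t x :\ x.
  apply/subsetP => y; rewrite !inE => cy.
  rewrite (in_subtree_trans (in_subtree_parent cx) cy) andbT.
  by apply: contraTneq cy => ->; apply: parent_notin_subtree.
apply/setP => y; apply/idP/idP => [yc|].
  rewrite inE (subsetP c_sub) //=; apply: connect_erel_sub c_sub _.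
  rewrite !inE in yc; apply: connect_trans (subtree_connected yc).
  by rewrite connect_erelC //; apply: subtree_connected.
rewrite inE => /andP [_]; rewrite connect_erelC //; move: y.
apply: connect_ind_to => [|y w /and3P [yS wS yw] _]; rewrite !inE // => cw.
move: yS; rewrite !inE => /andP [yx xy].
case/orP: (t_nested yw) => [wy|yw']; last exact: in_subtree_trans cw yw'.
case/orP: (in_subtree_total cw wy) => // yc; case: (eqVneq c y) => [->|cy].
  exact: in_subtree_refl.
have [p] := in_subtree_neq_parent yc cy; rewrite cx => -[<-] yx'.
by rewrite (in_subtree_anti t_rooted xy yx') eqxx in yx.
Qed.

Lemma shape_is_search x : is_search e (subtree t x) x t.
Proof.
have [n] := ubnP #|subtree t x|; elim: n x => // n IH x /ltnSE lt_x.
constructor; first by rewrite inE in_subtree_refl.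
move=> C [z]; rewrite !inE => /andP [zx xz] ->.
have [c cx cz] := in_subtree_neq_child xz zx.
exists c; have := subtree_comp cx cz; rewrite /comp_of => <-; split => //.
  by rewrite inE in_subtree_refl.
exact/IH/(leq_trans (proper_card (subtree_parent_proper t_rooted cx)) lt_x).
Qed.

End ShapeIsSearch.

Lemma shape_search_tree t : search_shape t -> search_tree e t.
Proof.
move=> [t_rooted t_adj t_nested]; have [r tr rt] := t_rooted; exists r; split => //.
have -> : [set: V] = subtree t r by apply/setP => y; rewrite !inE rt.
exact: shape_is_search.
Qed.

Definition shape_on S r t := [/\
  forall y, y \in S -> in_subtree t r y,
  forall y, y \in S -> y != r -> exists2 p, t y = Some p & p \in S,
  forall w x, w \in S -> x \in S -> t w = Some x -> exists z, in_subtree t w z && e x z &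
  forall x y, x \in S -> y \in S -> e x y -> in_subtree t x y || in_subtree t y x].

Section SearchStep.
Variables (S : {set V}) (r : V) (t : rtree V).
Local Notation C y := (comp_of e (S :\ r) y).
Hypotheses (rS : r \in S) (S_conn : {in S &, forall x y, connect (erel e S) x y}).
Hypothesis r_par : forall p, t r = Some p -> p \notin S.
Hypothesis comps : forall y, y \in S :\ r ->
  exists c, [/\ c \in C y, t c = Some r & shape_on (C y) c t].

Lemma mem_compD1 y w : w \in C y -> w \in S /\ w != r.
Proof. by move/(subsetP (comp_of_sub _ _ _)); rewrite !inE => /andP [-> ->]. Qed.

Lemma search_step_reach y : y \in S -> in_subtree t r y.
Proof.
move=> yS; case: (eqVneq y r) => [->|yr]; first exact: in_subtree_refl.
have yS' : y \in S :\ r by rewrite !inE yr.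
have [c [_ cr [reach _ _ _]]] := comps yS'.
exact: in_subtree_trans (in_subtree_parent cr) (reach _ (mem_comp_of e yS')).
Qed.

Lemma search_step_parent y : y \in S -> y != r -> exists2 p, t y = Some p & p \in S.
Proof.
move=> yS yr; have yS' : y \in S :\ r by rewrite !inE yr.
have [c [_ cr [_ par _ _]]] := comps yS'.
case: (eqVneq y c) => [->|yc]; first by exists r.
by have [p yp /mem_compD1 [pS _]] := par _ (mem_comp_of e yS') yc; exists p.
Qed.

Lemma search_step_adjacent w x : w \in S -> x \in S -> t w = Some x ->
  exists z, in_subtree t w z && e x z.
Proof.
move=> wS xS wx; case: (eqVneq w r) => [wr|wr].
  by rewrite wr in wx; move: (r_par wx); rewrite xS.
have wS' : w \in S :\ r by rewrite !inE wr.
have [c [cw cr [reach par adj _]]] := comps wS'.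
case: (eqVneq w c) => [wc|wc]; last first.
  have [p] := par _ (mem_comp_of e wS') wc; rewrite wx => -[<-] xC.
  exact: adj (mem_comp_of e wS') xC wx.
move: wx; rewrite wc cr => -[<-].
(* A path from [r] into the component [C w] enters it through an edge at [r]. *)
have rC : r \notin C w by apply/negP => /mem_compD1 [_]; rewrite eqxx.
have [a [b [aS bS ab aC bC]]] := connect_exit_edge (S_conn rS (proj1 (mem_compD1 cw))) rC cw.
case: (eqVneq a r) => [ar|ar]; first by exists b; rewrite reach // -ar.
have [_ br] := mem_compD1 bC.
move: aC; rewrite !inE ar aS /=; move: bC; rewrite inE => /andP [_ wb].
have ba : erel e (S :\ r) b a by rewrite /erel /= !inE ar aS br bS e_sym ab.
by rewrite (connect_trans wb (connect1 ba)).
Qed.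

Lemma search_step_nested x y : x \in S -> y \in S -> e x y ->
  in_subtree t x y || in_subtree t y x.
Proof.
move=> xS yS xy; case: (eqVneq x r) => [->|xr]; first by rewrite search_step_reach.
case: (eqVneq y r) => [->|yr]; first by rewrite search_step_reach ?orbT.
have xS' : x \in S :\ r by rewrite !inE xr.
have yS' : y \in S :\ r by rewrite !inE yr.
have [c [_ _ [_ _ _ nested]]] := comps xS'.
have yC : y \in comp_of e (S :\ r) x by rewrite inE yS' connect1 // /erel /= xS' yS' xy.
exact: nested _ _ (mem_comp_of e xS') yC xy.
Qed.

Lemma search_step_shape_on : shape_on S r t.
Proof.
by split; [apply: search_step_reach | apply: search_step_parent
          | apply: search_step_adjacent | apply: search_step_nested].
Qed.

End SearchStep.

Lemma is_search_inv S r t : is_search e S r t -> r \in S /\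
  (forall C, is_comp e (S :\ r) C -> exists c, [/\ c \in C, t c = Some r & is_search e C c t]).
Proof. by case. Qed.

Lemma is_search_shape_on S r t : is_search e S r t ->
  {in S &, forall x y, connect (erel e S) x y} -> (forall p, t r = Some p -> p \notin S) ->
  shape_on S r t.
Proof.
have [n] := ubnP #|S|; elim: n S r => // n IH S r /ltnSE lt_S.
move=> /is_search_inv [rS comps] S_conn r_par.
apply: search_step_shape_on => // y yS.
have [c [cC cr c_search]] := comps _ (ex_intro2 _ _ y yS erefl).
exists c; split => //; apply: IH c_search _ _.
- apply: leq_trans lt_S; apply: leq_ltn_trans (subset_leq_card (comp_of_sub _ _ _)) _.
  by rewrite (cardsD1 r S) rS.
- move=> a b aC bC; apply: connect_trans (comp_of_connected e_sym _ bC) => //.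
  by rewrite connect_erelC //; apply: comp_of_connected.
- by move=> p; rewrite cr => -[<-]; apply/negP => /mem_compD1 [_]; rewrite eqxx.
Qed.

Lemma search_tree_shape t : (forall x y, connect e x y) -> search_tree e t -> search_shape t.
Proof.
move=> G_conn [r [tr r_search]].
have S_conn : {in [set: V] &, forall x y, connect (erel e [set: V]) x y}.
  by move=> x y _ _; rewrite (@eq_connect _ _ e) // => a b; rewrite /erel /= !inE.
have r_par p : t r = Some p -> p \notin [set: V] by rewrite tr.
have [reach _ adj nested] := is_search_shape_on r_search S_conn r_par.
by split; [exists r => // y; apply: reach | move=> w x; apply: adj | move=> x y; apply: nested];
  rewrite ?inE.
Qed.

End SearchShape.

(** * Rotations *)

Section Rotation.
Variables (V : finType) (e : rel V).
Hypothesis e_sym : symmetric e.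
Variables (t : rtree V) (a b : V).
Hypotheses (t_rooted : rooted t) (t_adj : parent_adjacent e t) (t_nested : edges_nested e t).
Hypothesis ba : t b = Some a.

Local Notation t' := (rotate e t a b).

Lemma rotate_neq : a != b. Proof. exact: (parent_neq_child t_rooted ba). Qed.

Lemma rotate_a : t' a = Some b. Proof. by rewrite ffunE eqxx. Qed.

Lemma rotate_b : t' b = t a.
Proof. by rewrite ffunE eq_sym (negbTE rotate_neq) eqxx. Qed.

Lemma child_b_neq y : t y = Some b -> (y != a) && (y != b).
Proof.
move=> yb; rewrite [y == b]eq_sym (parent_neq_child t_rooted yb) andbT.
apply/eqP => ya; rewrite ya in yb; move/eqP: rotate_neq; apply.
exact: (in_subtree_anti t_rooted (in_subtree_parent ba) (in_subtree_parent yb)).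
Qed.

Lemma rotate_child y : t y = Some b ->
  t' y = if [exists z, in_subtree t y z && e a z] then Some a else Some b.
Proof.
by move=> yb; case/andP: (child_b_neq yb) => ya yb'; rewrite ffunE (negbTE ya) (negbTE yb') yb eqxx.
Qed.

Lemma rotate_other y : y != a -> y != b -> t y != Some b -> t' y = t y.
Proof. by move=> ya yb yNb; rewrite ffunE (negbTE ya) (negbTE yb) (negbTE yNb). Qed.

Lemma in_subtree_rotate x y : x != a -> x != b -> in_subtree t' x y = in_subtree t x y.
Proof.
move=> xa xb; have ab_t := in_subtree_parent ba.
apply/idP/idP; move: y; apply: in_subtree_ind => [|y p yp _ xp]; rewrite ?in_subtree_refl //.
- case: (eqVneq y a) => [ya|ya].
    move: yp; rewrite ya rotate_a => -[pb]; rewrite -pb in xp.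
    by have [q] := in_subtree_neq_parent xp (contra_neq esym xb); rewrite ba => -[<-].
  case: (eqVneq y b) => [yb|yb].
    move: yp; rewrite yb rotate_b => /in_subtree_parent pa.
    exact: in_subtree_trans (in_subtree_trans xp pa) ab_t.
  apply: in_subtree_trans xp _; case: (eqVneq (t y) (Some b)) => [yb'|yNb]; last first.
    by apply: in_subtree_parent; rewrite -(rotate_other ya yb yNb).
  move: yp; rewrite (rotate_child yb'); case: ifP => _ [<-]; last exact: in_subtree_parent yb'.
  exact: in_subtree_trans ab_t (in_subtree_parent yb').
- case: (eqVneq y a) => [ya|ya].
    rewrite ya; apply: in_subtree_trans (in_subtree_parent rotate_a).
    by apply: in_subtree_trans xp (in_subtree_parent _); rewrite rotate_b -ya.
  case: (eqVneq y b) => [yb|yb].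
    move: yp; rewrite yb ba => -[pa]; rewrite -pa in xp.
    by have [q] := in_subtree_neq_parent xp (contra_neq esym xa); rewrite rotate_a => -[<-].
  apply: in_subtree_trans xp _; case: (eqVneq (t y) (Some b)) => [yb'|yNb]; last first.
    by apply: in_subtree_parent; rewrite (rotate_other ya yb yNb).
  move: yp; rewrite yb' => -[<-]; move: (rotate_child yb'); case: ifP => _ ya'.
    exact: in_subtree_trans (in_subtree_parent rotate_a) (in_subtree_parent ya').
  exact: in_subtree_parent ya'.
Qed.

Lemma in_subtree_rotate_b y : in_subtree t' b y = in_subtree t a y.
Proof.
have ab_t := in_subtree_parent ba; have ba_t' := in_subtree_parent rotate_a.
apply/idP/idP; move: y; apply: in_subtree_ind => [|y p yp _ xp] //.
- case: (eqVneq y a) => [->|ya]; first exact: in_subtree_refl.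
  case: (eqVneq y b) => [->|yb] //.
  case: (eqVneq (t y) (Some b)) => [yb'|yNb].
    exact: in_subtree_trans ab_t (in_subtree_parent yb').
  by apply: in_subtree_trans xp (in_subtree_parent _); rewrite -(rotate_other ya yb yNb).
- case: (eqVneq y a) => [->|ya] //; case: (eqVneq y b) => [->|yb]; first exact: in_subtree_refl.
  case: (eqVneq (t y) (Some b)) => [yb'|yNb]; last first.
    by apply: in_subtree_trans xp (in_subtree_parent _); rewrite (rotate_other ya yb yNb).
  move: (rotate_child yb'); case: ifP => _ /in_subtree_parent //.
  exact: in_subtree_trans ba_t'.
Qed.

Lemma in_subtree_rotate_a y : in_subtree t a y -> ~~ in_subtree t b y -> in_subtree t' a y.
Proof.
move=> ay; apply: contraNT; move: y ay.
apply: in_subtree_ind => [|y p yp _ IHp yNa]; first by rewrite in_subtree_refl.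
case: (eqVneq y b) => [->|yb]; first exact: in_subtree_refl.
case: (eqVneq (t y) (Some b)) => [yb'|yNb]; first exact: in_subtree_parent yb'.
have ya : y != a by apply: contraNneq yNa => ->; apply: in_subtree_refl.
apply: in_subtree_trans (IHp _) (in_subtree_parent yp).
by apply: contra yNa => ap; apply: in_subtree_trans ap (in_subtree_parent _); rewrite rotate_other.
Qed.

Lemma rotate_moved w z : t w = Some b -> in_subtree t w z -> e a z -> t' w = Some a.
Proof.
by move=> wb wz az; rewrite rotate_child //; case: existsP => // -[]; exists z; rewrite wz.
Qed.

Lemma in_subtree_rotate_moved w z z' : t w = Some b -> in_subtree t w z -> e a z ->
  in_subtree t w z' -> in_subtree t' a z'.
Proof.
move=> wb wz az wz'; have /andP [wa wb'] := child_b_neq wb.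
apply: in_subtree_trans (in_subtree_parent (rotate_moved wb wz az)) _.
by rewrite in_subtree_rotate.
Qed.

Lemma rotate_rooted : rooted t'.
Proof.
have [r tr rt] := t_rooted; case ta: (t a) => [p|].
  have ra : r != a by apply/eqP => ra; rewrite ra ta in tr.
  have rb : r != b by apply/eqP => rb; rewrite rb ba in tr.
  by exists r => [|y]; rewrite ?rotate_other ?tr ?in_subtree_rotate // ?tr.
have ra : r = a := in_subtree_root ta (rt a).
by exists b => [|y]; rewrite ?rotate_b ?in_subtree_rotate_b // -ra.
Qed.

Lemma rotate_parent_adjacent : parent_adjacent e t'.
Proof.
move=> w x; case: (eqVneq w a) => [->|wa].
  (* A neighbour of [a] lies in [T|b], hence is [b] or lies in the subtree of a child [c]
     of [b]; that child moves under [a], bringing along its neighbour of [b]. *)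
  rewrite rotate_a => -[<-]; have [z0 /andP [bz0 az0]] := t_adj ba.
  case: (eqVneq z0 b) => [z0b|z0b]; first by exists a; rewrite in_subtree_refl e_sym -z0b.
  have [c cb cz0] := in_subtree_neq_child bz0 z0b; have [z /andP [cz bz]] := t_adj cb.
  by exists z; rewrite bz (in_subtree_rotate_moved cb cz0 az0 cz).
case: (eqVneq w b) => [->|wb].
  by rewrite rotate_b => /t_adj [z /andP [az xz]]; exists z; rewrite in_subtree_rotate_b az xz.
case: (eqVneq (t w) (Some b)) => [wb'|wNb]; last first.
  rewrite rotate_other // => /t_adj [z /andP [wz xz]].
  by exists z; rewrite in_subtree_rotate // wz xz.
rewrite rotate_child //; case: existsP => [[z /andP [wz az]] [<-]|_ [<-]].
  by exists z; rewrite in_subtree_rotate // wz az.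
by have [z /andP [wz bz]] := t_adj wb'; exists z; rewrite in_subtree_rotate // wz bz.
Qed.

Lemma rotate_edges_nested : edges_nested e t'.
Proof.
have ba_t' := in_subtree_parent rotate_a.
have nested_b z : z != a -> z != b -> e b z -> in_subtree t' b z || in_subtree t' z b.
  move=> za zb bz; rewrite in_subtree_rotate_b in_subtree_rotate //.
  case/orP: (t_nested bz) => [bz'|->]; last by rewrite orbT.
  by rewrite (in_subtree_trans (in_subtree_parent ba) bz').
have nested_a z : z != a -> z != b -> e a z -> in_subtree t' a z || in_subtree t' z a.
  move=> za zb az; rewrite [in_subtree t' z a]in_subtree_rotate //.
  case/orP: (t_nested az) => [az'|->]; last by rewrite orbT.
  case bz: (in_subtree t b z); last by rewrite in_subtree_rotate_a ?bz.
  by have [c cb cz] := in_subtree_neq_child bz zb; rewrite (in_subtree_rotate_moved cb cz az cz).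
move=> x y; case: (eqVneq x a) => [->|xa].
  case: (eqVneq y b) => [->|yb]; first by rewrite ba_t' orbT.
  case: (eqVneq y a) => [->|ya]; first by rewrite in_subtree_refl.
  exact: nested_a.
case: (eqVneq x b) => [->|xb].
  case: (eqVneq y a) => [->|ya]; first by rewrite ba_t'.
  case: (eqVneq y b) => [->|yb]; first by rewrite in_subtree_refl.
  exact: nested_b.
case: (eqVneq y a) => [->|ya]; first by move=> xa'; rewrite orbC nested_a // e_sym.
case: (eqVneq y b) => [->|yb]; first by move=> xb'; rewrite orbC nested_b // e_sym.
by move=> xy; rewrite !in_subtree_rotate // t_nested.
Qed.

End Rotation.

Lemma rotate_shape (V : finType) (e : rel V) (t : rtree V) (a b : V) :
  symmetric e -> search_shape e t -> t b = Some a -> search_shape e (rotate e t a b).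
Proof.
move=> e_sym [t_rooted t_adj t_nested] ba.
by split; [apply: rotate_rooted | apply: rotate_parent_adjacent | apply: rotate_edges_nested].
Qed.


Section RotationSequences.
Variables (V : finType) (e : rel V).
Hypothesis e_sym : symmetric e.
Implicit Types (t : rtree V) (s : seq (V * V * rtree V)).

Lemma rot_seq_cat t s1 s2 m t' : rot_seq e t s1 m -> rot_seq e m s2 t' ->
  rot_seq e t (s1 ++ s2) t'.
Proof.
elim: s1 t => [|[[a b] t1] s1 IHs] t /=; first by move=> ->.
by case=> ab s1_rot s2_rot; split => //; apply: IHs s1_rot s2_rot.
Qed.

Lemma rot_seq_catP t s1 s2 t' : rot_seq e t (s1 ++ s2) t' ->
  exists m, rot_seq e t s1 m /\ rot_seq e m s2 t'.
Proof.
elim: s1 t => [|[[a b] t1] s1 IHs] t /=; first by exists t.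
by case=> ab /IHs [m [s1_rot s2_rot]]; exists m.
Qed.

Lemma rotation_shape t a b : search_shape e t -> t b = Some a -> rotation e t a b (rotate e t a b).
Proof.
by move=> t_shape ba; split => //; apply: shape_search_tree => //; apply: rotate_shape.
Qed.
Lemma rot_seq_shape t q t' : search_shape e t -> rot_seq e t q t' -> search_shape e t'.
Proof.
elim: q t => [|[[a b] t1] q IHq] t t_shape /=; first by move=> <-.
by case=> [[_ _ ba ->]]; apply/IHq/rotate_shape.
Qed.

End RotationSequences.

Section Parity.
Variables (V : finType) (e : rel V).
Hypotheses (e_sym : symmetric e) (e_irr : irreflexive e).
Implicit Types (t : rtree V).

Definition uv_pair (u v a b : V) := ((a == u) && (b == v)) || ((a == v) && (b == u)).

Lemma edge_neq u v : e u v -> u != v.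
Proof. by apply: contraTneq => ->; rewrite e_irr. Qed.

Lemma in_subtree_edgeN t u v : search_shape e t -> e u v ->
  in_subtree t u v = ~~ in_subtree t v u.
Proof.
move=> [t_rooted _ t_nested] uv; case/orP: (t_nested _ _ uv) => [uv'|vu]; rewrite ?uv' ?vu.
  by apply/esym/negP => /(in_subtree_anti t_rooted uv') vu; rewrite vu e_irr in uv.
by apply/negP => /(in_subtree_anti t_rooted vu) uv'; rewrite uv' e_irr in uv.
Qed.

Lemma in_subtree_rotate_edge t a b u v : search_shape e t -> t b = Some a -> e u v ->
  in_subtree (rotate e t a b) u v = in_subtree t u v (+) uv_pair u v a b.
Proof.
move=> t_shape ba uv; have t'_shape := rotate_shape e_sym t_shape ba.
have t_rooted := shape_rooted t_shape; have uNv := edge_neq uv.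
case: (boolP ((u != a) && (u != b))) => [/andP [ua ub]|].
  rewrite (in_subtree_rotate e t_rooted ba) // /uv_pair [a == u]eq_sym [b == u]eq_sym.
  by rewrite (negbTE ua) (negbTE ub) andbF addbF.
case: (boolP ((v != a) && (v != b))) => [/andP [va vb]|].
  rewrite (in_subtree_edgeN t'_shape uv) (in_subtree_edgeN t_shape uv).
  rewrite (in_subtree_rotate e t_rooted ba) //.
  by rewrite /uv_pair [a == v]eq_sym [b == v]eq_sym (negbTE va) (negbTE vb) !andbF addbF.
have ba' := in_subtree_parent (rotate_a e t a b).
rewrite !negb_and !negbK => /orP [/eqP ua|/eqP ub] /orP [/eqP va|/eqP vb];
  rewrite ?ua ?ub ?va ?vb ?eqxx in uv uNv * => //.
- by rewrite ba' (in_subtree_edgeN t_shape uv) (in_subtree_parent ba) /uv_pair !eqxx orbT.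
- by rewrite (in_subtree_edgeN t'_shape uv) ba' (in_subtree_parent ba) /uv_pair !eqxx.
Qed.

Lemma rot_seq_in_subtree t s t' u v : search_shape e t -> rot_seq e t s t' -> e u v ->
  in_subtree t' u v = in_subtree t u v (+) odd (n_uv u v s).
Proof.
elim: s t => [|[[a b] t1] s IHs] t t_shape /=; first by move=> -> _; rewrite addbF.
case=> [[_ _ ba ->] s_rot] uv; have t1_shape := rotate_shape e_sym t_shape ba.
rewrite (IHs _ t1_shape s_rot uv) (in_subtree_rotate_edge t_shape ba uv).
by rewrite /n_uv /= -/(uv_pair u v a b) oddD oddb addbA.
Qed.

Lemma diff_orderE t t' u v : search_shape e t -> search_shape e t' -> e u v ->
  diff_order t t' u v <-> in_subtree t u v != in_subtree t' u v.
Proof.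
move=> t_shape t'_shape uv; have vu : e v u by rewrite e_sym.
rewrite /diff_order /anc (edge_neq uv) (edge_neq vu) /=.
rewrite -/(in_subtree t u v) -/(in_subtree t v u) -/(in_subtree t' u v) -/(in_subtree t' v u).
rewrite (in_subtree_edgeN t_shape vu) (in_subtree_edgeN t'_shape vu).
by case: (in_subtree t u v); case: (in_subtree t' u v); split => //=; intuition.
Qed.


Lemma same_orderE t t' u v : search_shape e t -> search_shape e t' -> e u v ->
  same_order t t' u v <-> in_subtree t u v = in_subtree t' u v.
Proof.
move=> t_shape t'_shape uv; have vu : e v u by rewrite e_sym.
rewrite /same_order /anc (edge_neq uv) (edge_neq vu) /=.
rewrite -/(in_subtree t u v) -/(in_subtree t v u) -/(in_subtree t' u v) -/(in_subtree t' v u).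
rewrite (in_subtree_edgeN t_shape vu) (in_subtree_edgeN t'_shape vu).
by case: (in_subtree t u v); case: (in_subtree t' u v); split => //=; intuition.
Qed.

End Parity.

(** * Connectivity of the rotation graph *)

Section Connectivity.
Variables (V : finType) (e : rel V).
Hypothesis e_sym : symmetric e.
Implicit Types (t : rtree V).

Lemma rotate_up t c y : search_shape e t -> in_subtree t c y ->
  exists s t', [/\ rot_seq e t s t', search_shape e t', subtree t' y = subtree t c &
    forall x, x \notin subtree t c -> subtree t' x = subtree t x].
Proof.
move=> + cy; have [n] := ubnP (#|subtree t c| - #|subtree t y|).
elim: n t cy => // n IH t cy /ltnSE lt_n t_shape; have t_rooted := shape_rooted t_shape.
case: (eqVneq y c) => [->|yc]; first by exists [::], t.
have [a ya ca] := in_subtree_neq_parent cy yc; set t1 := rotate e t a y.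
have t1_shape := rotate_shape e_sym t_shape ya.
have t_t1 : rotation e t a y t1 by apply: rotation_shape.
have t1_y : subtree t1 y = subtree t a.
  by apply/setP => z; rewrite !inE (in_subtree_rotate_b e t_rooted ya).
have t1_x x : x != a -> x != y -> subtree t1 x = subtree t x.
  by move=> xa xy; apply/setP => z; rewrite !inE (in_subtree_rotate e t_rooted ya).
have out_c x : x \notin subtree t c -> (x != a) && (x != y).
  by move=> xc; apply/andP; split; apply: contraNneq xc => ->; rewrite inE.
have frame x : x \notin subtree t c -> subtree t1 x = subtree t x.
  by move=> /out_c /andP [xa xy]; apply: t1_x.
case: (eqVneq a c) => [ac|ac].
  by exists [:: (a, y, t1)], t1; split => //; rewrite t1_y ac.
have t1_c : subtree t1 c = subtree t c by apply: t1_x; rewrite eq_sym.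
have : y \in subtree t1 c by rewrite t1_c inE.
rewrite inE => cy1.
have lt1 : #|subtree t1 c| - #|subtree t1 y| < n.
  rewrite t1_c t1_y; have := proper_card (subtree_parent_proper t_rooted ya).
  by have := subset_leq_card (subtree_sub ca); lia.
have [s [t' [s_rot t'_shape t'_y t'_x]]] := IH t1 cy1 lt1 t1_shape.
exists ((a, y, t1) :: s), t'; split => //; first by rewrite t'_y t1_c.
by move=> x xc; rewrite t'_x ?t1_c // frame.
Qed.

Definition settled t t2 : {set V} :=
  [set x | [forall z, in_subtree t2 z x ==> (subtree t z == subtree t2 z)]].

Lemma top_mismatch t t2 : rooted t2 -> (exists x, subtree t x != subtree t2 x) ->
  exists y, subtree t y != subtree t2 y /\
    forall z, in_subtree t2 z y -> z != y -> subtree t z = subtree t2 z.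
Proof.
move=> t2_rooted [x0 x0_bad].
have [y y_bad y_max] :=
  @arg_maxnP _ x0 (fun z => subtree t z != subtree t2 z) (fun z => #|subtree t2 z|) x0_bad.
exists y; split => // z zy zNy; apply/eqP; apply: contraT => z_bad.
have yNz : y != z by rewrite eq_sym.
have := leq_ltn_trans (y_max z z_bad) (proper_card (subtree_proper t2_rooted zy yNz)).
by rewrite ltnn.
Qed.

Lemma matched_position t t2 y : search_shape e t -> search_shape e t2 ->
  (forall z, in_subtree t2 z y -> z != y -> subtree t z = subtree t2 z) ->
  exists c, subtree t c = subtree t2 y.
Proof.
move=> [t_rooted t_adj t_nested] [t2_rooted t2_adj t2_nested] top.
case yp: (t2 y) => [p|]; last first.
  by have [r tr _] := t_rooted; exists r; rewrite !subtree_root.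
(* The subtree of [y] is a component of the subtree of its parent [p] minus [p], and
   [p] has the same subtree in [t] and [t2]. *)
have t_p := top p (in_subtree_parent yp) (parent_neq_child t2_rooted yp).
have py : in_subtree t p y by rewrite -mem_subtree t_p mem_subtree in_subtree_parent.
have yNp : y != p by rewrite eq_sym (parent_neq_child t2_rooted yp).
have [c cp cy] := in_subtree_neq_child py yNp; exists c.
rewrite (subtree_comp e_sym t_rooted t_adj t_nested cp cy) t_p.
by rewrite -(subtree_comp e_sym t2_rooted t2_adj t2_nested yp (in_subtree_refl _ _)).
Qed.

Lemma settled_grow t t2 : search_shape e t -> search_shape e t2 ->
  (exists x, subtree t x != subtree t2 x) ->
  exists s t', [/\ rot_seq e t s t', search_shape e t' & settled t t2 \proper settled t' t2].
Proof.
move=> t_shape t2_shape bad; have t2_rooted := shape_rooted t2_shape.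
have [y [y_bad top]] := top_mismatch t2_rooted bad.
have [c c_y] := matched_position t_shape t2_shape top.
have cy : in_subtree t c y by rewrite -mem_subtree c_y mem_subtree in_subtree_refl.
have [s [t' [s_rot t'_shape t'_y t'_x]]] := rotate_up t_shape cy.
have keep x : ~~ in_subtree t2 y x -> subtree t' x = subtree t x.
  by move=> yx; apply: t'_x; rewrite c_y mem_subtree.
exists s, t'; split => //; rewrite properE; apply/andP; split.
  apply/subsetP => x; rewrite !inE => /forallP x_settled; apply/forallP => z.
  apply/implyP => zx; have /eqP <- := implyP (x_settled z) zx; apply/eqP/keep.
  apply: contra y_bad => yz; exact: implyP (x_settled y) (in_subtree_trans yz zx).
apply/subsetPn; exists y; rewrite !inE; last first.
  by apply/forallPn; exists y; rewrite in_subtree_refl.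
apply/forallP => z; apply/implyP => zy; case: (eqVneq z y) => [->|zNy].
  by rewrite t'_y c_y.
rewrite keep ?top //; apply: contra zNy => yz.
by rewrite (in_subtree_anti t2_rooted zy yz).
Qed.

Lemma rot_seq_connected t t2 : search_shape e t -> search_shape e t2 ->
  exists s, rot_seq e t s t2.
Proof.
move=> + t2_shape; have [n] := ubnP #|~: settled t t2|.
elim: n t => // n IH t /ltnSE lt_n t_shape.
case: (boolP [exists x, subtree t x != subtree t2 x]) => [/existsP bad|/existsPn good].
  have [s [t' [s_rot t'_shape grow]]] := settled_grow t_shape t2_shape bad.
  rewrite -properC in grow.
  have [s' s'_rot] := IH t' (leq_trans (proper_card grow) lt_n) t'_shape.
  by exists (s ++ s'); apply: rot_seq_cat s_rot s'_rot.
exists [::]; apply: eq_tree_subtree (shape_rooted t_shape) (shape_rooted t2_shape) _ => x.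
by apply/eqP; move/negPn: (good x).
Qed.

End Connectivity.

(** * True twins *)

Section Relabel.
Variables (V : finType) (e : rel V) (s : {perm V}).
Hypothesis e_sym : symmetric e.
Hypothesis s_auto : forall x y, e (s x) (s y) = e x y.
Implicit Types (t : rtree V).

Definition relabel t : rtree V := [ffun x => omap s (t ((s^-1)%g x))].

Lemma relabelE t x : relabel t (s x) = omap s (t x).
Proof. by rewrite ffunE permK. Qed.

Lemma in_subtree_relabel t x y : in_subtree (relabel t) (s x) (s y) = in_subtree t x y.
Proof.
have prel_s a b : prel (relabel t) (s a) (s b) = prel t a b.
  rewrite /prel /= relabelE; case: (t a) => //= c.
  by apply/eqP/eqP => [[/perm_inj ->]|[->]].
apply/idP/idP; rewrite /in_subtree.
  rewrite -{2}(permK s x) -{2}(permK s y); apply: homo_connect => a b.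
  by rewrite -prel_s !permKV.
by apply: homo_connect => a b; rewrite prel_s.
Qed.

Lemma relabel_shape t : search_shape e t -> search_shape e (relabel t).
Proof.
move=> [[r tr rt] t_adj t_nested]; split.
- exists (s r) => [|y]; first by rewrite relabelE tr.
  by rewrite -(permKV s y) in_subtree_relabel.
- move=> w x; rewrite -(permKV s w) relabelE; case wp: (t _) => [p|] //= [<-].
  have [z /andP [wz pz]] := t_adj _ _ wp.
  by exists (s z); rewrite in_subtree_relabel s_auto wz pz.
- move=> x y; rewrite -(permKV s x) -(permKV s y) s_auto !in_subtree_relabel.
  exact: t_nested.
Qed.

Lemma relabel_rotate t a b : relabel (rotate e t a b) = rotate e (relabel t) (s a) (s b).
Proof.
apply/ffunP => x; rewrite -(permKV s x); move: ((s^-1)%g x) => y.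
rewrite relabelE [in RHS]ffunE !(inj_eq perm_inj) !relabelE.
have -> : (omap s (t y) == Some (s b)) = (t y == Some b).
  by case: (t y) => //= c; apply/eqP/eqP => [[/perm_inj ->]|[->]].
have -> : [exists z, in_subtree (relabel t) (s y) z && e (s a) z] =
          [exists z, in_subtree t y z && e a z].
  apply/existsP/existsP => -[z]; last by exists (s z); rewrite in_subtree_relabel s_auto.
  by rewrite -(permKV s z) in_subtree_relabel s_auto; exists ((s^-1)%g z).
rewrite ffunE; case: (y == a) => //; case: (y == b) => //.
by case: (t y == Some b) => //; case: [exists _, _].
Qed.


Definition relabel_step (p : V * V * rtree V) := (s p.1.1, s p.1.2, relabel p.2).

Lemma relabel_rot_seq t q t' : search_shape e t -> rot_seq e t q t' ->
  rot_seq e (relabel t) (map relabel_step q) (relabel t').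
Proof.
elim: q t => [|[[a b] t1] q IHq] t t_shape /=; first by move=> ->.
case=> [[_ _ ba ->] q_rot]; split; last exact: IHq (rotate_shape e_sym t_shape ba) q_rot.
rewrite relabel_rotate; apply: rotation_shape => //; first exact: relabel_shape.
by rewrite relabelE ba.
Qed.

End Relabel.

Lemma relabel_tpermK (V : finType) (u v : V) : involutive (relabel (tperm u v)).
Proof.
move=> t; apply/ffunP => x; rewrite !ffunE tpermV tpermK.
by case: (t x) => //= p; rewrite tpermK.
Qed.

Section Twins.
Variables (V : finType) (e : rel V) (u v : V).
Hypotheses (e_sym : symmetric e) (e_irr : irreflexive e) (uv_twins : true_twins e u v).
Implicit Types (t : rtree V).

Lemma twins_adj z : z != u -> z != v -> e u z = e v z.
Proof. by move=> zu zv; have := uv_twins z; rewrite (negbTE zu) (negbTE zv). Qed.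

Lemma twins_edge : u != v -> e u v.
Proof. by move=> uv; move: (uv_twins v); rewrite eqxx eq_sym (negbTE uv) => /= ->. Qed.

Lemma tperm_twins_auto x y : e (tperm u v x) (tperm u v y) = e x y.
Proof.
case: (tpermP u v x) => [->|->|/eqP xu /eqP xv]; case: (tpermP u v y) => [->|->|/eqP yu /eqP yv];
  rewrite ?e_irr //; try by rewrite e_sym.
all: try by rewrite twins_adj.
all: by rewrite ![e x _]e_sym twins_adj.
Qed.

Lemma twin_only_child t x : search_shape e t -> t v = Some u -> t x = Some u -> x = v.
Proof.
move=> [t_rooted t_adj t_nested] vu xu; have [z /andP [xz uz]] := t_adj _ _ xu.
have zu : z != u by apply: contraTneq xz => ->; exact: (parent_notin_subtree t_rooted xu).
have xv_nested : in_subtree t x v || in_subtree t v x.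
  move: (uv_twins z); rewrite (negbTE zu) uz => /esym /orP [/eqP zv|vz]; first by rewrite -zv xz.
  case/orP: (t_nested _ _ vz) => [vz'|zv]; first exact: in_subtree_total xz vz'.
  by rewrite (in_subtree_trans xz zv).
case/orP: xv_nested => [xv|vx]; first exact: (sibling_in_subtree t_rooted xu vu xv).
exact/esym/(sibling_in_subtree t_rooted vu xu vx).
Qed.

(* [v] is the only child of [u], and each child of [v] has a neighbour of [v], hence of
   [u], in its subtree, so all of them move under [u]. *)
Lemma twin_rotate t : search_shape e t -> t v = Some u -> u != v ->
  rotate e t u v = relabel (tperm u v) t.
Proof.
move=> t_shape vu uv; have [t_rooted t_adj _] := t_shape.
apply/ffunP => x; rewrite !ffunE tpermV.
case: (tpermP u v x) => [->|->|/eqP xu /eqP xv]; first by rewrite eqxx vu /= tpermL.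
  rewrite eq_sym (negbTE uv) eqxx; case up: (t u) => [p|] //=.
  have pu : p != u := parent_neq_child t_rooted up.
  have pv : p != v.
    apply: contraTneq (in_subtree_parent vu) => pv; rewrite -pv.
    exact: (parent_notin_subtree t_rooted up).
  by rewrite tpermD // eq_sym.
rewrite (negbTE xu) (negbTE xv); case xp: (t x) => [p|] //=.
case: (eqVneq p v) => [pv|pv]; first rewrite pv in xp *.
  have [z /andP [xz vz]] := t_adj _ _ xp.
  rewrite eqxx tpermR; case: existsP => // -[]; exists z; rewrite xz /=.
  move: (uv_twins z); rewrite vz orbT => /orP [/eqP zu|//]; rewrite zu in xz.
  have ux := in_subtree_trans (in_subtree_parent vu) (in_subtree_parent xp).
  by rewrite (in_subtree_anti t_rooted xz ux) eqxx in xu.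
have -> : (Some p == Some v) = false by apply/eqP => -[/eqP]; rewrite (negbTE pv).
case: (eqVneq p u) => [pu|pu]; last by rewrite tpermD // eq_sym.
by rewrite pu in xp; rewrite (twin_only_child t_shape vu xp) eqxx in xv.
Qed.

End Twins.

Section Shortening.
Variables (V : finType) (e : rel V) (u v : V).
Hypotheses (e_sym : symmetric e) (e_irr : irreflexive e) (uv_twins : true_twins e u v).
Implicit Types (t : rtree V).

Lemma uv_rotate t a b : search_shape e t -> t b = Some a -> uv_pair u v a b ->
  rotate e t a b = relabel (tperm u v) t.
Proof.
move=> t_shape ba; have ab := parent_neq_child (shape_rooted t_shape) ba.
case/orP => /andP [/eqP au /eqP bv]; rewrite au bv in ab ba *.
  exact: twin_rotate.
rewrite tpermC; apply: twin_rotate => // w; exact/esym/uv_twins.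
Qed.

Lemma rot_seq_shorten t q t' : search_shape e t -> rot_seq e t q t' -> 1 < n_uv u v q ->
  exists2 q', rot_seq e t q' t' & size q' < size q.
Proof.
elim: q t => [|[[a b] t1] q IHq] t t_shape //= [t_t1 q_rot].
have [_ _ ba t1E] := t_t1; have t1_shape : search_shape e t1 by rewrite t1E; apply: rotate_shape.
rewrite /n_uv /= -/(uv_pair u v a b) -/(n_uv u v q).
case ab_uv: (uv_pair u v a b) => /= n_q; last first.
  by have [q' q'_rot q'_size] := IHq _ t1_shape q_rot n_q; exists ((a, b, t1) :: q').
(* The first uv-rotation relabels by (u v); relabelling the rotations up to the next
   uv-rotation instead makes both uv-rotations unnecessary. *)
have has_uv : has (fun p : V * V * rtree V => uv_pair u v p.1.1 p.1.2) q by rewrite has_count.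
move: q_rot; case/hasP: has_uv => -[[a' b'] t2] /splitPr [q1 q2] ab'_uv q_rot.
have [m [q1_rot /= [m_t2 q2_rot]]] := rot_seq_catP q_rot; have [_ _ b'a' t2E] := m_t2.
have m_shape := rot_seq_shape e_sym t1_shape q1_rot.
have t1_sw : t1 = relabel (tperm u v) t by rewrite t1E uv_rotate.
have t2_sw : t2 = relabel (tperm u v) m by rewrite t2E uv_rotate.
have := relabel_rot_seq e_sym (tperm_twins_auto e_sym e_irr uv_twins) t1_shape q1_rot.
rewrite t1_sw relabel_tpermK -t2_sw => q1'_rot.
exists (map (relabel_step (tperm u v)) q1 ++ q2); first exact: rot_seq_cat q1'_rot q2_rot.
by rewrite !size_cat size_map /= addnS ltnS leqW.
Qed.

Lemma min_rot_seq_uv t q t' : search_shape e t -> min_rot_seq e t q t' -> n_uv u v q <= 1.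
Proof.
move=> t_shape [q_rot q_min]; rewrite leqNgt; apply/negP => uv2.
have [q' q'_rot q'_size] := rot_seq_shorten t_shape q_rot uv2.
by have := q_min _ q'_rot; rewrite leqNgt q'_size.
Qed.

End Shortening.

Section OrderParity.
Variables (V : finType) (e : rel V).
Hypotheses (e_sym : symmetric e) (e_irr : irreflexive e).
Variables (u v : V) (t t' : rtree V) (q : seq (V * V * rtree V)).
Hypotheses (t_shape : search_shape e t) (q_rot : rot_seq e t q t') (uv : e u v).

Let t'_shape := rot_seq_shape e_sym t_shape q_rot.

Lemma rot_seq_diff_order : diff_order t t' u v <-> odd (n_uv u v q).
Proof.
rewrite (diff_orderE e_sym e_irr t_shape t'_shape uv).
rewrite (rot_seq_in_subtree e_sym e_irr t_shape q_rot uv).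
by case: (in_subtree t u v); case: (odd _).
Qed.

Lemma rot_seq_same_order : same_order t t' u v <-> ~~ odd (n_uv u v q).
Proof.
rewrite (same_orderE e_sym e_irr t_shape t'_shape uv).
rewrite (rot_seq_in_subtree e_sym e_irr t_shape q_rot uv).
by case: (in_subtree t u v); case: (odd _).
Qed.

End OrderParity.

Theorem lemma4p1 (V : finType) (e : rel V)
    (e_sym : symmetric e) (e_irr : irreflexive e)
    (G_conn : forall x y : V, connect e x y) :
  (forall (u v : V) (t t' : rtree V),
      e u v -> search_tree e t -> search_tree e t' ->
      (diff_order t t' u v <->
       forall s, rot_seq e t s t' -> odd (n_uv u v s)))
  /\
  (forall (u v : V) (t t' : rtree V),
      true_twins e u v -> search_tree e t -> search_tree e t' ->
      (diff_order t t' u v ->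
         forall s, min_rot_seq e t s t' -> n_uv u v s = 1)
      /\
      (same_order t t' u v ->
         forall s, min_rot_seq e t s t' -> n_uv u v s = 0)).
Proof.
have shape := search_tree_shape e_sym G_conn.
split=> u v t t' + /shape t_shape /shape t'_shape.
  move=> uv; split=> [uv_diff q q_rot|all_odd].
    exact/(rot_seq_diff_order e_sym e_irr t_shape q_rot uv).
  have [q q_rot] := rot_seq_connected e_sym t_shape t'_shape.
  exact/(rot_seq_diff_order e_sym e_irr t_shape q_rot uv)/all_odd.
move=> uv_twins; case: (eqVneq u v) => [<-|uNv].
  by rewrite /diff_order /same_order /anc eqxx; split=> -[[]|[]].
have uv := twins_edge uv_twins uNv.
split=> uv_order q q_min; have := min_rot_seq_uv e_sym e_irr uv_twins t_shape q_min;
  case: q_min => q_rot _.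
  move/(rot_seq_diff_order e_sym e_irr t_shape q_rot uv): uv_order.
  by case: (n_uv u v q) => [|[|]].
move/(rot_seq_same_order e_sym e_irr t_shape q_rot uv): uv_order.
by case: (n_uv u v q) => [|[|]].
Qed.
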